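(* Let $K$ be an increasing sequence of positive integers such that $\{\mathfrak F^{-1}(K_n)\}$ is equidistributed. Then $K$ satisfies strong Benford's Law under $\mathcal F$-expansion, i.e. for every integer $s\ge2$ and $\mathbf b\in\mathcal F_s$, $$\lim_{n\to\infty}\frac{\#\{k\le n:\mathrm{LB}_s(K_k)=\mathbf b\}}{n}=\log_\phi\frac{\widetilde{\mathbf b}\cdot\widehat F}{\mathbf b\cdot\widehat F}.$$
   Context: $F$: $F_1=1,F_2=2,F_{n+2}=F_{n+1}+F_n$. Zeckendorf expansion $m=\sum_{k=1}^M\epsilon(k)F_{M-k+1}$ (unique, $\epsilon(k)\in\{0,1\}$, $\epsilon(1)=1$, $\epsilon(k)\epsilon(k+1)=0$); $\mathrm{LB}_s(m)=(\epsilon(1),\dots,\epsilon(s))$ if $M\ge s$. $\mathcal F_s$ ($s\ge2$): all $\mathrm{LB}_s(m)$, listed $\mathbf b_1,\dots,\mathbf b_\ell$ with $1+\mathbf b_k*F=\mathbf b_{k+1}*F$ where $\mathbf b*F=\sum_{k}\mathbf b(k)F_{s-k+1}$; $\mathbf b_{\ell+1}:=(1,0,1,0,\dots,1,0,1,1)$ if $s$ even, $(1,0,1,0,\dots,1,1,0)$ if $s$ odd; $\widetilde{\mathbf b_k}=\mathbf b_{k+1}$. $\omega=\phi^{-1}$ ($\phi$ golden ratio), $\mathbf b\cdot\widehat F=\sum_k\mathbf b(k)\omega^{k-1}$. $\mathfrak F(x)=\frac{\phi}{\sqrt5}(\phi^x+\phi^{-x}\cos(\pi x)\phi^{-2})$,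 increasing on $[1,\infty)$, inverse $\mathfrak F^{-1}$. A real sequence $(x_n)$ has $\{x_n\}$ equidistributed if $\lim_n\#\{k\le n:\{x_k\}\le\beta\}/n=\beta$ for all $\beta\in[0,1]$, $\{\cdot\}$ denoting fractional part. *)

From Stdlib Require Import Reals Lra List ClassicalDescription ClassicalEpsilon.
From Coquelicot Require Import Coquelicot.
Import ListNotations.
Open Scope R_scope.

(* F_1 = 1, F_2 = 2, F_{n+2} = F_{n+1} + F_n ; fibS k = F_{k+1} *)
Fixpoint fibS (k : nat) : nat :=
  match k with
  | O => 1%nat
  | S O => 2%nat
  | S ((S k') as k1) => (fibS k1 + fibS k')%nat
  end.

Definition F (n : nat) : nat := fibS (Nat.pred n).

(* b * F = sum_{k=1}^{s} b(k) F_{s-k+1}, where s = length b and b(1) is the head *)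
Fixpoint valF (b : list bool) : nat :=
  match b with
  | [] => 0%nat
  | x :: t => ((if x then F (S (length t)) else 0%nat) + valF t)%nat
  end.

Fixpoint no_adj (l : list bool) : Prop :=
  match l with
  | x :: ((y :: _) as t) => ~ (x = true /\ y = true) /\ no_adj t
  | _ => True
  end.

Definition is_zeck (m : nat) (eps : list bool) : Prop :=
  hd false eps = true /\ no_adj eps /\ valF eps = m.

Definition LB_is (s m : nat) (b : list bool) : Prop :=
  exists eps, is_zeck m eps /\ (s <= length eps)%nat /\ firstn s eps = b.

Definition inFs (s : nat) (b : list bool) : Prop := exists m, LB_is s m b.

Definition last_block (s : nat) : list bool :=
  concat (repeat [true; false] (Nat.div2 s - 1)) ++
  (if Nat.even s then [true; true] else [true; true; false]).

Definition is_tilde (s : nat) (b c : list bool) : Prop :=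
  (inFs s c /\ valF c = S (valF b)) \/
  ((forall c', inFs s c' -> valF c' <> S (valF b)) /\ c = last_block s).

Definition phi : R := (1 + sqrt 5) / 2.
Definition omega : R := / phi.

(* b . \hat F = sum_k b(k) omega^(k-1) *)
Fixpoint dotw_from (i : nat) (b : list bool) : R :=
  match b with
  | [] => 0
  | x :: t => (if x then omega ^ i else 0) + dotw_from (S i) t
  end.
Definition dotw (b : list bool) : R := dotw_from 0 b.

Definition log_phi (y : R) : R := ln y / ln phi.

Definition FF (x : R) : R :=
  phi / sqrt 5 * (Rpower phi x + Rpower phi (- x) * cos (PI * x) * Rpower phi (-2)).

Definition FFinv (y : R) : R :=
  epsilon (inhabits 1) (fun x => 1 <= x /\ FF x = y).

Fixpoint count_upto (P : nat -> Prop) (n : nat) : nat :=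
  match n with
  | O => O
  | S n' => ((if excluded_middle_informative (P n) then 1 else 0) + count_upto P n')%nat
  end.

Definition equidistributed (x : nat -> R) : Prop :=
  forall beta, 0 <= beta <= 1 ->
    is_lim_seq (fun n => INR (count_upto (fun k => frac_part (x k) <= beta) n) / INR n) beta.

(** If the Zeckendorf expansion of [m] has length [s + r], its leading block is
    [b] exactly when [valF_pad b r <= m < valF_pad bt r].  Binet's formula gives
    [log_phi (valF_pad c r) = s + r + log_phi (fib_coef * dotw c) + o(1)], and
    [FFinv m = log_phi (m / fib_coef) + o(1)].  Hence, for large [m], [FFinv m]
    mod 1 lying slightly inside [[log_phi (dotw b), log_phi (dotw bt)]] implies
    [LB_s(m) = b], which in turn forces it into a slightly enlarged copy of
    that interval (mod 1).
    Equidistribution of [FFinv (K n)] mod 1 then yields the density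
    [log_phi (dotw bt) - log_phi (dotw b)]. *)

From Stdlib Require Import Reals List Lra Lia ZArith ClassicalEpsilon.
From Coquelicot Require Import Coquelicot.
Import ListNotations.
Open Scope R_scope.

(** * Zeckendorf strings and leading blocks *)

Lemma F_SS n : F (S (S n)) = (F (S n) + F n)%nat.
Proof. destruct n; reflexivity. Qed.

Lemma F_pos n : (1 <= F n)%nat.
Proof.
  induction n as [n IH] using (well_founded_induction Wf_nat.lt_wf).
  destruct n as [|[|n]]; try (cbv; lia).
  rewrite F_SS. specialize (IH n). lia.
Qed.

Lemma F_le_S n : (F n <= F (S n))%nat.
Proof. destruct n; [cbv; lia|]. rewrite F_SS. lia. Qed.

Lemma F_le_mono n m : (n <= m)%nat -> (F n <= F m)%nat.
Proof. induction 1; [lia|]. pose proof (F_le_S m). lia. Qed.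

Lemma F_window_unique n k m :
  (F n <= m < F (S n))%nat -> (F k <= m < F (S k))%nat -> n = k.
Proof.
  intros Hn Hk. destruct (Nat.lt_trichotomy n k) as [H|[H|H]]; auto.
  - pose proof (F_le_mono (S n) k H). lia.
  - pose proof (F_le_mono (S k) n H). lia.
Qed.

Lemma no_adj_tl a l : no_adj (a :: l) -> no_adj l.
Proof. destruct l; simpl; tauto. Qed.

Lemma no_adj_app_l x t : no_adj (x ++ t) -> no_adj x.
Proof.
  induction x as [|a x IH]; simpl; auto.
  destruct x as [|a' x]; simpl; auto.
  intros [H1 H2]. split; [exact H1 | exact (IH H2)].
Qed.

Lemma no_adj_false l : no_adj l -> no_adj (false :: l).
Proof. destruct l; simpl; auto. intros H; split; auto. intros [Hf _]; discriminate. Qed.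

Lemma no_adj_true_false l : no_adj l -> no_adj (true :: false :: l).
Proof. intros H. split; [intros [_ Hf]; discriminate | now apply no_adj_false]. Qed.

Lemma no_adj_app_zeros x r : no_adj x -> no_adj (x ++ repeat false r).
Proof.
  induction x as [|a x IH]; intros H.
  - induction r; simpl; auto. now apply no_adj_false.
  - destruct x as [|a' x].
    + destruct r as [|r]; simpl; auto. split; [intros [_ Hf]; discriminate|].
      apply (IH I).
    + destruct H as [H1 H2]. split; auto.
Qed.

(** For a block [c], the least integer whose expansion of length [length c + r]
    starts with [c]. *)
Definition valF_pad (c : list bool) (r : nat) : nat := valF (c ++ repeat false r).

Lemma valF_zeros r : valF (repeat false r) = 0%nat.
Proof. induction r; simpl; auto. Qed.

Lemma valF_app x y : valF (x ++ y) = (valF_pad x (length y) + valF y)%nat.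
Proof.
  unfold valF_pad. induction x as [|a x IH]; simpl.
  - rewrite valF_zeros; lia.
  - rewrite !length_app, repeat_length, IH. lia.
Qed.

Lemma valF_lt_F t : no_adj t -> (valF t < F (S (length t)))%nat.
Proof.
  induction t as [t IH]
    using (well_founded_induction (Wf_nat.well_founded_ltof _ (@length bool))).
  unfold Wf_nat.ltof in IH.
  destruct t as [|[] t]; intros H; simpl length.
  - cbv; lia.
  - destruct t as [|[] t']; [cbv; lia|destruct H as [[] _]; auto|].
    assert (Ht' := no_adj_tl _ _ (no_adj_tl _ _ H)).
    specialize (IH t' ltac:(simpl; lia) Ht'). simpl valF; simpl length.
    rewrite (F_SS (S (length t'))). lia.
  - specialize (IH t ltac:(simpl; lia) (no_adj_tl _ _ H)).
    pose proof (F_le_S (S (length t))). simpl valF. lia.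
Qed.

Lemma valF_app_lt x y t u : length x = length y -> length t = length u ->
  no_adj (x ++ t) -> no_adj (y ++ u) -> (valF x < valF y)%nat ->
  (valF (x ++ t) < valF (y ++ u))%nat.
Proof.
  revert y. induction x as [|a x IH]; intros [|c y] Hl Ht Hx Hy Hv;
    simpl in Hl; try lia.
  injection Hl as Hl. simpl app in *.
  pose proof (no_adj_tl _ _ Hx) as Hx'. pose proof (no_adj_tl _ _ Hy) as Hy'.
  simpl valF in Hv |- *. rewrite !length_app, Ht, Hl. rewrite Hl in Hv.
  destruct a, c.
  - specialize (IH y Hl Ht Hx' Hy' ltac:(lia)). lia.
  - pose proof (valF_lt_F y (no_adj_app_l _ _ Hy')). lia.
  - pose proof (valF_lt_F (x ++ t) Hx'). rewrite length_app, Hl, Ht in H. lia.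
  - now apply IH.
Qed.

Lemma valF_inj x y : length x = length y -> no_adj x -> no_adj y ->
  valF x = valF y -> x = y.
Proof.
  revert y. induction x as [|a x IH]; intros [|c y] Hl Hx Hy Hv;
    simpl in Hl; try lia; auto.
  injection Hl as Hl.
  pose proof (no_adj_tl _ _ Hx) as Hx'. pose proof (no_adj_tl _ _ Hy) as Hy'.
  simpl valF in Hv. rewrite Hl in Hv.
  destruct a, c.
  - f_equal. apply IH; auto. lia.
  - pose proof (valF_lt_F y Hy'). lia.
  - pose proof (valF_lt_F x Hx'). rewrite Hl in *. lia.
  - f_equal. apply IH; auto.
Qed.

Lemma valF_pad_le_app c p t : length c = length p -> no_adj c -> no_adj (p ++ t) ->
  (valF c <= valF p)%nat -> (valF_pad c (length t) <= valF (p ++ t))%nat.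
Proof.
  intros Hl Hc Hpt Hv. destruct (Nat.eq_dec (valF c) (valF p)) as [E|E].
  - assert (c = p) by (apply valF_inj; eauto using no_adj_app_l). subst p.
    rewrite valF_app. lia.
  - apply Nat.lt_le_incl, valF_app_lt; auto using no_adj_app_zeros; [|lia].
    now rewrite repeat_length.
Qed.

Lemma zeck_string_exists L m : (m < F (S L))%nat ->
  exists t, length t = L /\ no_adj t /\ valF t = m /\ ((F L <= m)%nat -> hd false t = true).
Proof.
  revert m. induction L as [L IH] using (well_founded_induction Wf_nat.lt_wf). intros m Hm.
  destruct L as [|L].
  - exists []. cbv in Hm |- *. repeat split; lia.
  - destruct (Nat.lt_ge_cases m (F (S L))) as [Hlt|Hge].
    + destruct (IH L ltac:(lia) m Hlt) as [t [H1 [H2 [H3 _]]]].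
      exists (false :: t). split; [simpl; lia|]. split; [now apply no_adj_false|].
      split; [exact H3 | intros; lia].
    + destruct L as [|L].
      * exists [true]. cbv in Hm, Hge |- *. repeat split; lia.
      * rewrite F_SS in Hm.
        destruct (IH L ltac:(lia) (m - F (S (S L)))%nat ltac:(lia)) as [t [H1 [H2 [H3 _]]]].
        exists (true :: false :: t). split; [simpl; lia|].
        split; [now apply no_adj_true_false|]. split; [|reflexivity].
        simpl valF. simpl length. rewrite H1, H3. lia.
Qed.

Lemma zeck_exists m : (1 <= m)%nat -> exists eps, is_zeck m eps.
Proof.
  intros H.
  assert (HM : exists M, (F M <= m < F (S M))%nat).
  { induction m as [|[|m] IHm]; [lia| exists 1%nat; cbv; lia|].
    destruct (IHm ltac:(lia)) as [M HM].
    destruct (Nat.lt_ge_cases (S (S m)) (F (S M))).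
    - exists M. lia.
    - exists (S M). rewrite F_SS. pose proof (F_pos M). lia. }
  destruct HM as [M HM].
  destruct (zeck_string_exists M m ltac:(lia)) as [t [_ [H2 [H3 H4]]]].
  exists t. repeat split; auto. apply H4; lia.
Qed.

Lemma zeck_bounds m eps : is_zeck m eps ->
  (F (length eps) <= m < F (S (length eps)))%nat.
Proof.
  intros [Hh [Hn <-]]. split; [|now apply valF_lt_F].
  destruct eps as [|[] t]; try discriminate. simpl; lia.
Qed.

Lemma inFs_iff s c : (1 <= s)%nat ->
  inFs s c <-> length c = s /\ no_adj c /\ hd false c = true.
Proof.
  intros Hs. split.
  - intros [m [eps [[Hh [Hn _]] [Hl <-]]]].
    rewrite <- (firstn_skipn s eps) in Hn.
    split; [rewrite length_firstn; lia|]. split; [eapply no_adj_app_l; eauto|].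
    destruct eps; [simpl in Hl; lia|]. destruct s; [lia|]. exact Hh.
  - intros [Hl [Hn Hh]]. exists (valF c), c.
    split; [repeat split; auto|]. split; [lia|]. rewrite <- Hl. apply firstn_all.
Qed.

(** Every value in [[F s, F (s+1))] is reached by a block, so in the second
    alternative of [is_tilde] the block [b] is the largest one. *)
Lemma tilde_cases s b bt : (2 <= s)%nat -> inFs s b -> is_tilde s b bt ->
  (inFs s bt /\ valF bt = S (valF b)) \/
  (bt = last_block s /\ forall c, inFs s c -> (valF c <= valF b)%nat).
Proof.
  intros Hs Hb [Hsucc|[Hnone Hlast]]; [now left|right].
  split; [exact Hlast|]. intros c Hc.
  apply (inFs_iff s) in Hb as [Hbl [_ Hbh]], Hc as [Hcl [Hcn _]]; try lia.
  destruct (Nat.le_gt_cases (valF c) (valF b)) as [|Hgt]; [assumption | exfalso].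
  pose proof (valF_lt_F c Hcn) as Hc. rewrite Hcl in Hc.
  assert (Hbs : (F s <= valF b)%nat).
  { destruct b as [|[] b]; try discriminate. simpl in Hbl |- *. subst s. lia. }
  destruct (zeck_string_exists s (S (valF b)) ltac:(lia)) as [t [Htl [Htn [Htv Hth]]]].
  apply (Hnone t); [|exact Htv].
  apply (inFs_iff s t ltac:(lia)). split; [exact Htl|]. split; [exact Htn|]. apply Hth; lia.
Qed.

Lemma last_block_shape s : (2 <= s)%nat -> exists j z, (2 * j + 2 + z)%nat = s /\
  last_block s = concat (repeat [true; false] j) ++ true :: true :: repeat false z.
Proof.
  intros Hs. unfold last_block. pose proof (Nat.div2_odd s) as Hd.
  rewrite <- Nat.negb_even in Hd.
  exists (Nat.div2 s - 1)%nat. destruct (Nat.even s); simpl Nat.b2n in Hd.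
  - exists 0%nat. split; [lia | reflexivity].
  - exists 1%nat. split; [lia | reflexivity].
Qed.

Lemma length_alternating j : length (concat (repeat [true; false] j)) = (2 * j)%nat.
Proof. induction j; simpl; auto. rewrite IHj. lia. Qed.

Lemma valF_alternating j t :
  valF (concat (repeat [true; false] j) ++ true :: true :: t) =
  (F (S (2 * j + 2 + length t)) + valF t)%nat.
Proof.
  induction j as [|j IH].
  - simpl. rewrite (F_SS (S (length t))). lia.
  - simpl concat. simpl app. simpl valF. rewrite IH.
    rewrite length_app, length_alternating. simpl length.
    replace (S (2 * S j + 2 + length t)) with (S (S (S (2 * j + 2 + length t)))) by lia.
    rewrite (F_SS (S (2 * j + 2 + length t))).
    replace (2 * j + S (S (length t)))%nat with (2 * j + 2 + length t)%nat by lia. lia.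
Qed.

Lemma length_last_block s : (2 <= s)%nat -> length (last_block s) = s.
Proof.
  intros Hs. destruct (last_block_shape s Hs) as [j [z [Hjz ->]]].
  rewrite length_app, length_alternating. simpl. rewrite repeat_length. lia.
Qed.

Lemma hd_last_block s : (2 <= s)%nat -> hd false (last_block s) = true.
Proof. intros Hs. destruct (last_block_shape s Hs) as [[|j] [z [_ ->]]]; reflexivity. Qed.

Lemma valF_pad_last_block s r : (2 <= s)%nat -> valF_pad (last_block s) r = F (S (s + r)).
Proof.
  intros Hs. destruct (last_block_shape s Hs) as [j [z [Hjz ->]]].
  unfold valF_pad. rewrite <- app_assoc. simpl app. rewrite <- repeat_app.
  rewrite valF_alternating, valF_zeros, repeat_length, Nat.add_0_r. f_equal. lia.
Qed.

Lemma valF_pad_ge_F c r : hd false c = true -> (F (length c + r) <= valF_pad c r)%nat.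
Proof.
  destruct c as [|[] c]; try discriminate. intros _.
  unfold valF_pad. simpl. rewrite length_app, repeat_length. lia.
Qed.

Lemma valF_pad_lt_F c r : no_adj c -> (valF_pad c r < F (S (length c + r)))%nat.
Proof.
  intros H. unfold valF_pad.
  rewrite <- (repeat_length false r) at 2. rewrite <- length_app.
  apply valF_lt_F, no_adj_app_zeros, H.
Qed.

Section Successor_block.
Variables (s : nat) (b bt : list bool).
Hypotheses (Hs : (2 <= s)%nat) (Hb : inFs s b) (Ht : is_tilde s b bt).

Lemma length_tilde : length bt = s.
Proof.
  destruct (tilde_cases s b bt Hs Hb Ht) as [[Hc _]|[-> _]].
  - apply inFs_iff in Hc as [H _]; [exact H | lia].
  - now apply length_last_block.
Qed.

Lemma hd_tilde : hd false bt = true.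
Proof.
  destruct (tilde_cases s b bt Hs Hb Ht) as [[Hc _]|[-> _]].
  - apply inFs_iff in Hc as [_ [_ H]]; [exact H | lia].
  - now apply hd_last_block.
Qed.

Lemma valF_pad_tilde_le r : (valF_pad bt r <= F (S (s + r)))%nat.
Proof.
  destruct (tilde_cases s b bt Hs Hb Ht) as [[Hc _]|[-> _]].
  - apply inFs_iff in Hc as [Hl [Hn _]]; [|lia].
    pose proof (valF_pad_lt_F bt r Hn). rewrite Hl in H. lia.
  - rewrite valF_pad_last_block; auto.
Qed.

Lemma valF_app_lt_tilde t : no_adj (b ++ t) -> (valF (b ++ t) < valF_pad bt (length t))%nat.
Proof.
  intros Hbt. apply inFs_iff in Hb as Hb'; [destruct Hb' as [Hbl [Hbn _]] | lia].
  destruct (tilde_cases s b bt Hs Hb Ht) as [[Hc Hv]|[-> _]].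
  - apply inFs_iff in Hc as [Hl [Hn _]]; [|lia].
    apply valF_app_lt; auto using no_adj_app_zeros.
    + congruence.
    + now rewrite repeat_length.
    + lia.
  - rewrite valF_pad_last_block, <- Hbl, <- length_app; auto.
    now apply valF_lt_F.
Qed.

Lemma LB_is_of_window m r :
  (valF_pad b r <= m < valF_pad bt r)%nat -> LB_is s m b.
Proof.
  intros [Hm1 Hm2].
  apply inFs_iff in Hb as Hb'; [destruct Hb' as [Hbl [Hbn Hbh]] | lia].
  pose proof (valF_pad_ge_F b r Hbh) as HbF. rewrite Hbl in HbF.
  pose proof (valF_pad_tilde_le r).
  destruct (zeck_exists m) as [eps Hz]; [pose proof (F_pos (s + r)); lia|].
  assert (Hlen : length eps = (s + r)%nat)
    by (apply (F_window_unique _ _ m); [apply zeck_bounds, Hz | lia]).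
  destruct Hz as [Hh [Hn Hv]].
  set (p := firstn s eps). set (rest := skipn s eps).
  assert (He : eps = p ++ rest) by (symmetry; apply firstn_skipn).
  assert (Hr : length rest = r) by (unfold rest; rewrite length_skipn; lia).
  assert (Hp : inFs s p).
  { exists m, eps. split; [repeat split; auto|]. split; [lia|reflexivity]. }
  apply inFs_iff in Hp as Hp'; [destruct Hp' as [Hpl [Hpn _]] | lia].
  rewrite He in Hn, Hv.
  destruct (Nat.lt_trichotomy (valF p) (valF b)) as [Hlt|[Heq|Hgt]].
  - exfalso. pose proof (valF_app_lt p b rest (repeat false r)) as Hc.
    rewrite repeat_length in Hc.
    specialize (Hc ltac:(congruence) Hr Hn (no_adj_app_zeros b r Hbn) Hlt).
    unfold valF_pad in Hm1. lia.
  - assert (p = b) by (apply valF_inj; auto; congruence).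
    exists eps. split; [repeat split; auto; congruence|]. split; [lia|auto].
  - exfalso. destruct (tilde_cases s b bt Hs Hb Ht) as [[Hc Hsucc]|[_ Hmax]].
    + apply inFs_iff in Hc as [Hl [Htn _]]; [|lia].
      pose proof (valF_pad_le_app bt p rest ltac:(congruence) Htn Hn ltac:(lia)) as Hle.
      rewrite Hr in Hle. lia.
    + specialize (Hmax p Hp). lia.
Qed.

Lemma LB_is_iff m :
  LB_is s m b <-> exists r, (valF_pad b r <= m < valF_pad bt r)%nat.
Proof.
  split; [|intros [r Hr]; exact (LB_is_of_window m r Hr)].
  intros [eps [[_ [Hn Hv]] [_ Hf]]].
  rewrite <- (firstn_skipn s eps), Hf in Hn, Hv.
  exists (length (skipn s eps)). rewrite valF_app in Hv.
  pose proof (valF_app_lt_tilde _ Hn). rewrite valF_app in H. lia.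
Qed.

End Successor_block.

(** * Golden ratio and Binet's formula *)

Lemma sqrt5_bounds : 2 < sqrt 5 < 3.
Proof.
  pose proof (sqrt_sqrt 5 ltac:(lra)). pose proof (sqrt_pos 5). nra.
Qed.

Lemma phi_gt_1 : 1 < phi.
Proof. unfold phi. pose proof sqrt5_bounds. lra. Qed.

Lemma phi_sq : phi * phi = phi + 1.
Proof. unfold phi. pose proof (sqrt_sqrt 5 ltac:(lra)). nra. Qed.

Lemma omega_phi : omega * phi = 1.
Proof. unfold omega. pose proof phi_gt_1. field. lra. Qed.

Lemma omega_eq : omega = phi - 1.
Proof. pose proof omega_phi. pose proof phi_sq. pose proof phi_gt_1. nra. Qed.

Lemma ln_phi_pos : 0 < ln phi.
Proof. rewrite <- ln_1. apply ln_increasing; [lra | apply phi_gt_1]. Qed.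

(** The constant of Binet's formula [F n ~ fib_coef * phi ^ n]. *)
Definition fib_coef : R := phi / sqrt 5.

Lemma fib_coef_bounds : 0 < fib_coef <= 1.
Proof.
  unfold fib_coef, phi. pose proof sqrt5_bounds. split.
  - apply Rdiv_lt_0_compat; lra.
  - apply Rmult_le_reg_r with (sqrt 5); [lra|]. field_simplify; lra.
Qed.

Lemma binet n : INR (F n) = fib_coef * (phi ^ n + (-1) ^ n / phi ^ (n + 2)).
Proof.
  pose proof phi_gt_1. pose proof phi_sq as Hsq.
  assert (Hs5 : sqrt 5 = 2 * phi - 1) by (unfold phi; lra).
  unfold fib_coef. rewrite Hs5.
  induction n as [n IH] using (well_founded_induction Wf_nat.lt_wf).
  destruct n as [|[|n]].
  - simpl. field_simplify_eq; nra.
  - simpl. field_simplify_eq; nra.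
  - rewrite F_SS, plus_INR, (IH (S n)), (IH n) by lia.
    replace (S (S n) + 2)%nat with (S (S (n + 2))) by lia.
    replace (S n + 2)%nat with (S (n + 2)) by lia.
    assert (0 < phi ^ n) by (apply pow_lt; lra).
    assert (0 < phi ^ (n + 2)) by (apply pow_lt; lra).
    simpl pow. field_simplify_eq; [|repeat split; nra].
    replace (phi ^ 4) with ((phi * phi) * (phi * phi)) by ring.
    replace (phi ^ 3) with (phi * (phi * phi)) by ring.
    replace (phi ^ 2) with (phi * phi) by ring.
    rewrite Hsq. ring.
Qed.

Lemma F_approx n : Rabs (INR (F n) - fib_coef * phi ^ n) <= 1.
Proof.
  rewrite binet. pose proof fib_coef_bounds. pose proof phi_gt_1.
  assert (1 <= phi ^ (n + 2)) by (apply pow_R1_Rle; lra).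
  replace (fib_coef * (phi ^ n + (-1) ^ n / phi ^ (n + 2)) - fib_coef * phi ^ n)
    with (fib_coef * (-1) ^ n * / phi ^ (n + 2)) by (field; lra).
  rewrite !Rabs_mult, pow_1_abs, Rabs_pos_eq, Rabs_inv, Rabs_pos_eq by lra.
  assert (/ phi ^ (n + 2) <= 1) by (rewrite <- Rinv_1; apply Rinv_le_contravar; lra).
  assert (0 < / phi ^ (n + 2)) by (apply Rinv_0_lt_compat; lra).
  nra.
Qed.

Lemma dotw_from_S i c : dotw_from (S i) c = omega * dotw_from i c.
Proof.
  revert i; induction c as [|a c IH]; intros i; simpl; [ring|].
  rewrite IH. destruct a; ring.
Qed.

Lemma dotw_cons a c : dotw (a :: c) = (if a then 1 else 0) + omega * dotw c.
Proof. unfold dotw. simpl. rewrite dotw_from_S. destruct a; ring. Qed.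

Lemma dotw_zeros z : dotw (repeat false z) = 0.
Proof. induction z; [reflexivity|]. simpl. rewrite dotw_cons, IHz. ring. Qed.

Lemma dotw_nonneg c : 0 <= dotw c.
Proof.
  induction c as [|a c IH]; [unfold dotw; simpl; lra|].
  rewrite dotw_cons, omega_eq. pose proof phi_gt_1. destruct a; nra.
Qed.

Lemma dotw_ge_1 c : hd false c = true -> 1 <= dotw c.
Proof.
  destruct c as [|[] c]; try discriminate. intros _.
  rewrite dotw_cons, omega_eq. pose proof phi_gt_1. pose proof (dotw_nonneg c). nra.
Qed.

Lemma dotw_le_phi c : no_adj c -> dotw c <= phi.
Proof.
  pose proof phi_gt_1. pose proof phi_sq. pose proof omega_phi. pose proof omega_eq.
  induction c as [c IH]
    using (well_founded_induction (Wf_nat.well_founded_ltof _ (@length bool))).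
  unfold Wf_nat.ltof in IH.
  intros Hn. destruct c as [|a c]; [unfold dotw; simpl; lra|].
  rewrite dotw_cons. destruct a.
  - destruct c as [|[] c']; [unfold dotw; simpl; lra | destruct Hn as [[] _]; auto |].
    rewrite dotw_cons.
    assert (dotw c' <= phi)
      by (apply IH; [simpl; lia | exact (no_adj_tl _ _ (no_adj_tl _ _ Hn))]).
    nra.
  - assert (dotw c <= phi) by (apply IH; [simpl; lia | exact (no_adj_tl _ _ Hn)]). nra.
Qed.

Lemma dotw_alternating j t :
  dotw (concat (repeat [true; false] j) ++ true :: true :: t) =
  phi + omega ^ (2 * j + 2) * dotw t.
Proof.
  pose proof phi_sq. pose proof omega_eq.
  induction j as [|j IH].
  - simpl. rewrite !dotw_cons. nra.
  - simpl concat. simpl app. rewrite !dotw_cons, IH.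
    replace (2 * S j + 2)%nat with (S (S (2 * j + 2))) by lia. simpl pow. nra.
Qed.

Lemma dotw_last_block s : (2 <= s)%nat -> dotw (last_block s) = phi.
Proof.
  intros Hs. destruct (last_block_shape s Hs) as [j [z [_ ->]]].
  rewrite dotw_alternating, dotw_zeros. ring.
Qed.

Lemma valF_pad_approx c r :
  Rabs (INR (valF_pad c r) - fib_coef * phi ^ (length c + r) * dotw c) <= INR (length c).
Proof.
  induction c as [|a c IH].
  - unfold valF_pad, dotw. simpl. rewrite valF_zeros. simpl.
    rewrite Rmult_0_r, Rminus_0_r, Rabs_R0. lra.
  - unfold valF_pad in *. simpl app. simpl length.
    rewrite dotw_cons, S_INR.
    replace (S (length c) + r)%nat with (S (length c + r)) by lia.
    assert (Hw : fib_coef * phi ^ S (length c + r) * omega * dotw c =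
                 fib_coef * phi ^ (length c + r) * dotw c).
    { rewrite <- (Rmult_1_r (fib_coef * phi ^ (length c + r) * dotw c)), <- omega_phi.
      simpl pow. ring. }
    destruct a; simpl valF; rewrite ?length_app, ?repeat_length.
    + pose proof (F_approx (S (length c + r))).
      rewrite plus_INR.
      replace (INR (F (S (length c + r))) + INR (valF (c ++ repeat false r)) -
        fib_coef * phi ^ S (length c + r) * (1 + omega * dotw c)) with
        ((INR (F (S (length c + r))) - fib_coef * phi ^ S (length c + r)) +
         (INR (valF (c ++ repeat false r)) - fib_coef * phi ^ (length c + r) * dotw c))
        by (rewrite <- Hw; ring).
      eapply Rle_trans; [apply Rabs_triang | lra].
    + replace (fib_coef * phi ^ S (length c + r) * (0 + omega * dotw c))
        with (fib_coef * phi ^ (length c + r) * dotw c) by (rewrite <- Hw; ring).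
      lra.
Qed.

(** * Logarithmic asymptotics *)

Lemma log_phi_le_compat u v : 0 < u -> u <= v -> log_phi u <= log_phi v.
Proof.
  intros Hu Huv. unfold log_phi, Rdiv. pose proof ln_phi_pos.
  apply Rmult_le_compat_r; [left; now apply Rinv_0_lt_compat|].
  destruct Huv as [Hlt|<-]; [left; now apply ln_increasing | lra].
Qed.

Lemma log_phi_lt_iff u v : 0 < u -> 0 < v -> log_phi u < log_phi v <-> u < v.
Proof.
  intros Hu Hv. unfold log_phi, Rdiv. pose proof ln_phi_pos.
  assert (0 < / ln phi) by now apply Rinv_0_lt_compat.
  split; intros H1.
  - apply ln_lt_inv; auto. apply Rmult_lt_reg_r with (/ ln phi); auto.
  - apply Rmult_lt_compat_r; auto. now apply ln_increasing.
Qed.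

Lemma log_phi_mult u v : 0 < u -> 0 < v -> log_phi (u * v) = log_phi u + log_phi v.
Proof.
  intros Hu Hv. unfold log_phi. rewrite ln_mult by auto. field. pose proof ln_phi_pos; lra.
Qed.

Lemma log_phi_div u v : 0 < u -> 0 < v -> log_phi (u / v) = log_phi u - log_phi v.
Proof.
  intros Hu Hv. unfold Rdiv at 1. rewrite log_phi_mult by (auto; now apply Rinv_0_lt_compat).
  unfold log_phi. rewrite ln_Rinv by auto. field. pose proof ln_phi_pos; lra.
Qed.

Lemma log_phi_pow n : log_phi (phi ^ n) = INR n.
Proof.
  unfold log_phi. pose proof phi_gt_1. pose proof ln_phi_pos.
  rewrite ln_pow by lra. field. lra.
Qed.

Lemma log_phi_nonneg u : 1 <= u -> 0 <= log_phi u.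
Proof.
  intros Hu. replace 0 with (log_phi (phi ^ 0)) by (rewrite log_phi_pow; reflexivity).
  apply log_phi_le_compat; simpl; lra.
Qed.

Lemma log_phi_Rpower x : log_phi (Rpower phi x) = x.
Proof. unfold log_phi, Rpower. rewrite ln_exp. field. pose proof ln_phi_pos; lra. Qed.

Lemma Rabs_ln_le u : 1 / 2 <= u -> Rabs (ln u) <= 2 * Rabs (u - 1).
Proof.
  intros Hu.
  assert (Hle : forall v, 0 < v -> ln v <= v - 1).
  { intros v Hv. pose proof (exp_ineq1_le (ln v)). rewrite exp_ln in H; lra. }
  pose proof (Hle u ltac:(lra)) as H1.
  pose proof (Hle (/ u) ltac:(apply Rinv_0_lt_compat; lra)) as H2.
  rewrite ln_Rinv in H2 by lra.
  replace (/ u - 1) with ((1 - u) / u) in H2 by (field; lra).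
  destruct (Rle_dec 1 u).
  - assert ((1 - u) / u <= 0)
      by (unfold Rdiv; assert (0 < / u) by (apply Rinv_0_lt_compat; lra); nra).
    rewrite !Rabs_pos_eq by lra. lra.
  - assert ((1 - u) / u <= 2 * (1 - u)).
    { apply Rle_div_l; nra. }
    rewrite !Rabs_left1 by lra. lra.
Qed.

Lemma log_phi_close u v a e : 0 < e -> 2 * a <= v -> 2 * a / (e * ln phi) < v ->
  Rabs (u - v) <= a -> Rabs (log_phi u - log_phi v) < e.
Proof.
  intros He H2a Hav Huv. pose proof ln_phi_pos.
  assert (Ha : 0 <= a) by (pose proof (Rabs_pos (u - v)); lra).
  assert (Hv : 0 < v)
    by (assert (0 <= 2 * a / (e * ln phi)) by (apply Rdiv_le_0_compat; nra); lra).
  assert (Hq : Rabs (u / v - 1) <= a / v).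
  { replace (u / v - 1) with ((u - v) / v) by (field; lra).
    unfold Rdiv. rewrite Rabs_mult, Rabs_inv, (Rabs_pos_eq v) by lra.
    apply Rmult_le_compat_r; [left; now apply Rinv_0_lt_compat | exact Huv]. }
  assert (Hav2 : a / v <= 1 / 2) by (apply Rle_div_l; lra).
  assert (Hu : 0 < u / v) by (apply Rabs_le_between in Hq; lra).
  rewrite <- log_phi_div by (auto; replace u with (u / v * v) by (field; lra); nra).
  unfold log_phi at 1. unfold Rdiv at 1.
  rewrite Rabs_mult, Rabs_inv, (Rabs_pos_eq (ln phi)) by lra.
  apply Rlt_div_l; [lra|].
  eapply Rle_lt_trans; [apply Rabs_ln_le; apply Rabs_le_between in Hq; lra|].
  apply Rlt_div_l in Hav; [|nra]. apply Rle_lt_trans with (2 * (a / v)); [lra|].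
  replace (2 * (a / v)) with (2 * a / v) by (field; lra).
  apply Rlt_div_l; nra.
Qed.

Lemma FF_continuous : continuity FF.
Proof. unfold FF, Rpower. reg. Qed.

Lemma Rpower_phi_ge_1 x : 0 <= x -> 1 <= Rpower phi x.
Proof.
  intros Hx. unfold Rpower. pose proof ln_phi_pos.
  pose proof (exp_ineq1_le (x * ln phi)). nra.
Qed.

Lemma FF_approx x : 0 <= x -> Rabs (FF x - fib_coef * Rpower phi x) <= fib_coef.
Proof.
  intros Hx. pose proof fib_coef_bounds.
  unfold FF. fold fib_coef.
  replace (Rpower phi (-2)) with (/ Rpower phi 2) by (rewrite <- Rpower_Ropp; f_equal; ring).
  replace (fib_coef * (Rpower phi x + Rpower phi (- x) * cos (PI * x) * / Rpower phi 2)
           - fib_coef * Rpower phi x)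
    with (fib_coef * (/ Rpower phi x * cos (PI * x) * / Rpower phi 2))
    by (rewrite !Rpower_Ropp; ring).
  assert (Hinv : forall a, 1 <= a -> Rabs (/ a) <= 1).
  { intros a Ha. rewrite Rabs_pos_eq by (left; apply Rinv_0_lt_compat; lra).
    rewrite <- Rinv_1. apply Rinv_le_contravar; lra. }
  pose proof (Hinv _ (Rpower_phi_ge_1 x Hx)).
  pose proof (Hinv _ (Rpower_phi_ge_1 2 ltac:(lra))).
  assert (Rabs (cos (PI * x)) <= 1) by (apply Rabs_le; apply COS_bound).
  rewrite !Rabs_mult, (Rabs_pos_eq fib_coef) by lra.
  pose proof (Rabs_pos (/ Rpower phi x)). pose proof (Rabs_pos (cos (PI * x))).
  pose proof (Rabs_pos (/ Rpower phi 2)).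
  assert (Rabs (/ Rpower phi x) * Rabs (cos (PI * x)) <= 1) by nra.
  assert (0 <= Rabs (/ Rpower phi x) * Rabs (cos (PI * x))) by nra.
  assert (Rabs (/ Rpower phi x) * Rabs (cos (PI * x)) * Rabs (/ Rpower phi 2) <= 1) by nra.
  rewrite <- Rmult_1_r. apply Rmult_le_compat_l; lra.
Qed.

(** [FF 1 = F 1] is Binet's formula at [n = 1]. *)
Lemma FF_1 : FF 1 = 1.
Proof.
  pose proof phi_gt_1. transitivity (INR (F 1)); [|reflexivity].
  rewrite binet. unfold FF. fold fib_coef.
  rewrite Rmult_1_r, cos_PI, Rpower_Ropp, Rpower_1 by lra.
  replace (Rpower phi (-2)) with (/ phi ^ 2)
    by (rewrite <- Rpower_pow, <- Rpower_Ropp by lra; f_equal; simpl; ring).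
  simpl. field. lra.
Qed.

Lemma Rpower_log_phi u : 0 < u -> Rpower phi (log_phi u) = u.
Proof.
  intros Hu. unfold Rpower, log_phi.
  replace (ln u / ln phi * ln phi) with (ln u) by (field; pose proof ln_phi_pos; lra).
  now apply exp_ln.
Qed.

Lemma FF_surjective y : 1 <= y -> exists x, 1 <= x /\ FF x = y.
Proof.
  intros Hy. pose proof fib_coef_bounds. pose proof phi_gt_1.
  set (u := y / fib_coef + 1).
  assert (Hcu : fib_coef * u = y + fib_coef) by (unfold u; field; lra).
  assert (Hu : 1 <= u) by nra.
  set (X := 1 + log_phi u).
  assert (HX : 1 <= X) by (pose proof (log_phi_nonneg u Hu); unfold X; lra).
  assert (HpX : Rpower phi X = phi * u)
    by (unfold X; rewrite Rpower_plus, Rpower_1, Rpower_log_phi; lra).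
  assert (HFX : y <= FF X).
  { pose proof (FF_approx X ltac:(lra)) as Ha. apply Rabs_le_between in Ha.
    rewrite HpX in Ha. nra. }
  destruct (IVT_gen FF 1 X y FF_continuous) as [x [Hx1 Hx2]].
  { rewrite FF_1, Rmin_left, Rmax_right by lra. lra. }
  exists x. rewrite Rmin_left in Hx1 by lra. split; [lra | exact Hx2].
Qed.

Lemma FFinv_spec y : 1 <= y -> 1 <= FFinv y /\ FF (FFinv y) = y.
Proof. intros Hy. unfold FFinv. apply epsilon_spec, FF_surjective, Hy. Qed.

Lemma FFinv_asymptotic e : 0 < e ->
  eventually (fun m : nat => Rabs (FFinv (INR m) + log_phi fib_coef - log_phi (INR m)) < e).
Proof.
  intros He. pose proof ln_phi_pos. pose proof fib_coef_bounds.
  assert (0 < 2 * 1 / (e * ln phi)) by (apply Rdiv_lt_0_compat; nra).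
  destruct (INR_unbounded (2 + 2 * 1 / (e * ln phi))) as [N HN].
  exists N. intros m Hm. apply le_INR in Hm.
  destruct (FFinv_spec (INR m) ltac:(lra)) as [Hx1 Hx2].
  set (x := FFinv (INR m)) in *.
  assert (0 < Rpower phi x) by (unfold Rpower; apply exp_pos).
  replace (x + log_phi fib_coef) with (log_phi (fib_coef * Rpower phi x))
    by (rewrite log_phi_mult, log_phi_Rpower by lra; ring).
  apply (log_phi_close _ _ 1); [lra | lra | lra |].
  rewrite <- Rabs_Ropp, <- Hx2.
  replace (- (fib_coef * Rpower phi x - FF x)) with (FF x - fib_coef * Rpower phi x) by ring.
  pose proof (FF_approx x ltac:(lra)). lra.
Qed.

Lemma eventually_fib_coef_pow_ge c M : hd false c = true ->
  eventually (fun r => M <= fib_coef * phi ^ (length c + r) * dotw c).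
Proof.
  intros Hc. pose proof fib_coef_bounds. pose proof phi_gt_1. pose proof (dotw_ge_1 c Hc).
  destruct (Pow_x_infinity phi ltac:(rewrite Rabs_pos_eq; lra) (M / (fib_coef * dotw c)))
    as [N HN].
  exists N. intros r Hr.
  specialize (HN (length c + r)%nat ltac:(lia)).
  rewrite Rabs_pos_eq in HN by (apply pow_le; lra).
  apply Rge_le, Rle_div_l in HN; nra.
Qed.

Lemma log_phi_valF_pad c : hd false c = true -> forall e, 0 < e ->
  eventually (fun r => Rabs (log_phi (INR (valF_pad c r)) -
    (INR (length c + r) + log_phi fib_coef + log_phi (dotw c))) < e).
Proof.
  intros Hc e He. pose proof ln_phi_pos. pose proof fib_coef_bounds. pose proof phi_gt_1.
  pose proof (dotw_ge_1 c Hc). pose proof (pos_INR (length c)).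
  set (a := INR (length c)) in *.
  assert (0 <= 2 * a / (e * ln phi)) by (apply Rdiv_le_0_compat; nra).
  generalize (eventually_fib_coef_pow_ge c (2 * a + 2 * a / (e * ln phi) + 1) Hc).
  apply filter_imp. intros r Hr.
  assert (0 < phi ^ (length c + r)) by (apply pow_lt; lra).
  replace (INR (length c + r) + log_phi fib_coef + log_phi (dotw c))
    with (log_phi (fib_coef * phi ^ (length c + r) * dotw c))
    by (rewrite !log_phi_mult, log_phi_pow; [ring | nra ..]).
  apply (log_phi_close _ _ a); [lra | lra | lra | apply valF_pad_approx].
Qed.

Lemma eventually_log_phi_ge B : eventually (fun m : nat => B <= log_phi (INR m)).
Proof.
  destruct (INR_unbounded (Rpower phi B)) as [N HN].
  assert (0 < Rpower phi B) by (unfold Rpower; apply exp_pos).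
  exists N. intros m Hm. apply le_INR in Hm.
  rewrite <- (log_phi_Rpower B) at 1. apply log_phi_le_compat; lra.
Qed.

Lemma valF_pad_pos c r : hd false c = true -> 0 < INR (valF_pad c r).
Proof.
  intros Hc. apply lt_0_INR.
  pose proof (valF_pad_ge_F c r Hc). pose proof (F_pos (length c + r)). lia.
Qed.

(** * Densities and equidistribution *)

Lemma count_upto_S P n : count_upto P (S n) =
  ((if excluded_middle_informative (P (S n)) then 1%nat else 0%nat) + count_upto P n)%nat.
Proof. reflexivity. Qed.

Lemma count_upto_le P n : (count_upto P n <= n)%nat.
Proof. induction n; simpl; [lia|]. destruct excluded_middle_informative; lia. Qed.

Lemma count_upto_ext P Q n : (forall k, P k <-> Q k) -> count_upto P n = count_upto Q n.
Proof.
  intros H. induction n; [reflexivity|]. rewrite !count_upto_S, IHn.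
  destruct (excluded_middle_informative (P (S n))), (excluded_middle_informative (Q (S n)));
    firstorder.
Qed.

Lemma count_upto_imp_from P Q k0 n : (forall k, (k0 <= k)%nat -> P k -> Q k) ->
  (count_upto P n <= count_upto Q n + k0)%nat.
Proof.
  intros H. induction n; [simpl; lia|]. rewrite !count_upto_S.
  destruct (excluded_middle_informative (P (S n))), (excluded_middle_informative (Q (S n)));
    try lia.
  destruct (Nat.le_gt_cases k0 (S n)); [exfalso; auto|].
  pose proof (count_upto_le P n). lia.
Qed.

Lemma count_upto_or P Q n :
  (count_upto (fun k => P k \/ Q k) n <= count_upto P n + count_upto Q n)%nat.
Proof.
  induction n; [simpl; lia|]. rewrite !count_upto_S.
  destruct (excluded_middle_informative (P (S n) \/ Q (S n))),
    (excluded_middle_informative (P (S n))), (excluded_middle_informative (Q (S n)));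
    try lia; tauto.
Qed.

Lemma count_upto_split P Q n : count_upto P n =
  (count_upto (fun k => P k /\ Q k) n + count_upto (fun k => P k /\ ~ Q k) n)%nat.
Proof.
  induction n; [reflexivity|]. rewrite !count_upto_S.
  destruct (excluded_middle_informative (P (S n))),
    (excluded_middle_informative (P (S n) /\ Q (S n))),
    (excluded_middle_informative (P (S n) /\ ~ Q (S n))); try lia; tauto.
Qed.

Lemma count_upto_not P n : (count_upto P n + count_upto (fun k => ~ P k) n)%nat = n.
Proof.
  induction n; [reflexivity|]. rewrite !count_upto_S.
  destruct (excluded_middle_informative (P (S n))),
    (excluded_middle_informative (~ P (S n))); try lia; tauto.
Qed.

(** [upper_density_le P d] and [lower_density_ge P d] say that the limsup, resp.
    liminf, of [count_upto P n / n] is [<= d], resp. [>= d]. *)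
Definition upper_density_le (P : nat -> Prop) (d : R) : Prop :=
  forall e, 0 < e -> eventually (fun n => INR (count_upto P n) <= (d + e) * INR n).

Definition lower_density_ge (P : nat -> Prop) (d : R) : Prop :=
  forall e, 0 < e -> eventually (fun n => (d - e) * INR n <= INR (count_upto P n)).

Lemma eventually_ge_nat N : eventually (fun n => (N <= n)%nat).
Proof. now exists N. Qed.

Lemma eventually_imp2 {P Q R : nat -> Prop} : eventually P -> eventually Q ->
  (forall n, P n -> Q n -> R n) -> eventually R.
Proof.
  intros HP HQ H. apply (filter_imp (fun n => P n /\ Q n)); [intros n []; auto|].
  now apply filter_and.
Qed.

Lemma eventually_le_mult_INR a e : 0 < e -> eventually (fun n => a <= e * INR n).
Proof.
  intros He. destruct (INR_unbounded (a / e)) as [N HN].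
  exists N. intros n Hn. apply le_INR in Hn.
  apply Rmult_le_reg_r with (/ e); [now apply Rinv_0_lt_compat|].
  replace (e * INR n * / e) with (INR n) by (field; lra). unfold Rdiv in HN. lra.
Qed.

Lemma density_lim (P : nat -> Prop) (d : R) :
  upper_density_le P d -> lower_density_ge P d ->
  is_lim_seq (fun n => INR (count_upto P n) / INR n) d.
Proof.
  intros Hup Hlo. apply is_lim_seq_spec. intros [e He]. simpl.
  apply (eventually_imp2 (eventually_imp2 (Hup (e / 2) ltac:(lra)) (Hlo (e / 2) ltac:(lra))
    (fun n H1 H2 => conj H1 H2)) (eventually_le_mult_INR 1 1 ltac:(lra))).
  intros n [H1 H2] Hn. assert (0 < e * INR n) by nra.
  apply Rabs_lt_between'. split; [apply Rlt_div_r | apply Rlt_div_l]; lra.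
Qed.

Lemma density_of_lim (P : nat -> Prop) (d : R) :
  is_lim_seq (fun n => INR (count_upto P n) / INR n) d ->
  upper_density_le P d /\ lower_density_ge P d.
Proof.
  intros Hl. apply is_lim_seq_spec in Hl. simpl in Hl.
  split; intros e He;
    apply (eventually_imp2 (Hl (mkposreal e He)) (eventually_le_mult_INR 1 1 ltac:(lra)));
    simpl; intros n H1 Hn; apply Rabs_lt_between' in H1 as [H1 H2].
  - apply Rlt_div_l in H2; nra.
  - apply Rlt_div_r in H1; nra.
Qed.

Lemma upper_density_approx P d :
  (forall e, 0 < e -> upper_density_le P (d + e)) -> upper_density_le P d.
Proof.
  intros H e He. generalize (H (e / 2) ltac:(lra) (e / 2) ltac:(lra)).
  apply filter_imp. intros n Hn. replace (d + e) with (d + e / 2 + e / 2) by field. exact Hn.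
Qed.

Lemma lower_density_approx P d :
  (forall e, 0 < e -> lower_density_ge P (d - e)) -> lower_density_ge P d.
Proof.
  intros H e He. generalize (H (e / 2) ltac:(lra) (e / 2) ltac:(lra)).
  apply filter_imp. intros n Hn. replace (d - e) with (d - e / 2 - e / 2) by field. exact Hn.
Qed.

Lemma upper_density_ev_imp P Q d : eventually (fun k => P k -> Q k) ->
  upper_density_le Q d -> upper_density_le P d.
Proof.
  intros [k0 Hk0] HQ e He.
  apply (eventually_imp2 (HQ (e / 2) ltac:(lra))
    (eventually_le_mult_INR (INR k0) (e / 2) ltac:(lra))).
  intros n H1 H2.
  pose proof (le_INR _ _ (count_upto_imp_from P Q k0 n Hk0)) as H. rewrite plus_INR in H. nra.
Qed.

Lemma lower_density_ev_imp P Q d : eventually (fun k => Q k -> P k) ->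
  lower_density_ge Q d -> lower_density_ge P d.
Proof.
  intros [k0 Hk0] HQ e He.
  apply (eventually_imp2 (HQ (e / 2) ltac:(lra))
    (eventually_le_mult_INR (INR k0) (e / 2) ltac:(lra))).
  intros n H1 H2.
  pose proof (le_INR _ _ (count_upto_imp_from Q P k0 n Hk0)) as H. rewrite plus_INR in H. nra.
Qed.

Lemma upper_density_or P Q d1 d2 : upper_density_le P d1 -> upper_density_le Q d2 ->
  upper_density_le (fun k => P k \/ Q k) (d1 + d2).
Proof.
  intros HP HQ e He.
  apply (eventually_imp2 (HP (e / 2) ltac:(lra)) (HQ (e / 2) ltac:(lra))). intros n H1 H2.
  pose proof (le_INR _ _ (count_upto_or P Q n)) as H. rewrite plus_INR in H. nra.
Qed.

Lemma upper_density_not P d :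
  lower_density_ge P d -> upper_density_le (fun k => ~ P k) (1 - d).
Proof.
  intros HP e He. generalize (HP e He). apply filter_imp. intros n Hn.
  pose proof (count_upto_not P n) as Hs. apply (f_equal INR) in Hs. rewrite plus_INR in Hs. nra.
Qed.

Lemma upper_density_and_not P Q d1 d2 : (forall k, Q k -> P k) ->
  upper_density_le P d1 -> lower_density_ge Q d2 ->
  upper_density_le (fun k => P k /\ ~ Q k) (d1 - d2).
Proof.
  intros HQP HP HQ e He.
  apply (eventually_imp2 (HP (e / 2) ltac:(lra)) (HQ (e / 2) ltac:(lra))). intros n H1 H2.
  pose proof (count_upto_split P Q n) as Hs.
  rewrite (count_upto_ext (fun k => P k /\ Q k) Q) in Hs by firstorder.
  apply (f_equal INR) in Hs. rewrite plus_INR in Hs. nra.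
Qed.

Lemma lower_density_and_not P Q d1 d2 : lower_density_ge P d1 -> upper_density_le Q d2 ->
  lower_density_ge (fun k => P k /\ ~ Q k) (d1 - d2).
Proof.
  intros HP HQ e He.
  apply (eventually_imp2 (HP (e / 2) ltac:(lra)) (HQ (e / 2) ltac:(lra))). intros n H1 H2.
  pose proof (count_upto_split P Q n) as Hs.
  pose proof (count_upto_imp_from (fun k => P k /\ Q k) Q 0 n (fun k _ H => proj2 H)) as HPQ.
  rewrite Nat.add_0_r in HPQ. apply le_INR in HPQ.
  apply (f_equal INR) in Hs. rewrite plus_INR in Hs. nra.
Qed.

Section Equidistributed.
Variable x : nat -> R.
Hypothesis Hx : equidistributed x.

Lemma upper_density_frac_le c : 0 <= c -> upper_density_le (fun k => frac_part (x k) <= c) c.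
Proof.
  intros Hc. destruct (Rle_dec c 1) as [Hc1|Hc1].
  - apply density_of_lim, Hx. lra.
  - intros e He. exists 0%nat. intros n _.
    pose proof (le_INR _ _ (count_upto_le (fun k => frac_part (x k) <= c) n)).
    pose proof (pos_INR n). nra.
Qed.

Lemma lower_density_frac_le c : c <= 1 -> lower_density_ge (fun k => frac_part (x k) <= c) c.
Proof.
  intros Hc. destruct (Rle_dec 0 c) as [Hc0|Hc0].
  - apply density_of_lim, Hx. lra.
  - intros e He. exists 0%nat. intros n _. pose proof (pos_INR n).
    pose proof (pos_INR (count_upto (fun k => frac_part (x k) <= c) n)). nra.
Qed.

Lemma upper_density_frac_lt c : 0 <= c -> upper_density_le (fun k => frac_part (x k) < c) c.
Proof.
  intros Hc. apply upper_density_ev_imp with (fun k => frac_part (x k) <= c).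
  - exists 0%nat. intros k _. lra.
  - now apply upper_density_frac_le.
Qed.

Lemma lower_density_frac_lt c : c <= 1 -> lower_density_ge (fun k => frac_part (x k) < c) c.
Proof.
  intros Hc. apply lower_density_approx. intros e He.
  apply lower_density_ev_imp with (fun k => frac_part (x k) <= c - e).
  - exists 0%nat. intros k _. lra.
  - apply lower_density_frac_le. lra.
Qed.

End Equidistributed.

Lemma frac_part_near_Z z (M : Z) a b e : 0 <= a -> b <= 1 ->
  a - e <= z - IZR M <= b + e ->
  (a - e <= frac_part z <= b + e) \/ 1 - e <= frac_part z \/ frac_part z <= e.
Proof.
  intros Ha Hb Hz. unfold frac_part in *.
  pose proof (base_Int_part z) as [H1 H2].
  destruct (Z.lt_trichotomy (Int_part z) M) as [HM|[HM|HM]].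
  - apply Z.lt_le_pred in HM. apply IZR_le in HM. rewrite <- Z.sub_1_r, minus_IZR in HM. lra.
  - subst M. lra.
  - apply Zlt_le_succ in HM. apply IZR_le in HM. rewrite succ_IZR in HM. lra.
Qed.

Lemma density_of_frac_window (x : nat -> R) (P : nat -> Prop) a b :
  equidistributed x -> 0 <= a <= b -> b <= 1 ->
  (forall e, 0 < e ->
     eventually (fun k => P k -> exists M : Z, a - e <= x k - IZR M <= b + e)) ->
  (forall e, 0 < e -> eventually (fun k => a + e <= frac_part (x k) <= b - e -> P k)) ->
  is_lim_seq (fun n => INR (count_upto P n) / INR n) (b - a).
Proof.
  intros Hx Hab Hb Hnear Hinside. apply density_lim.
  - apply upper_density_approx. intros e He.
    set (e' := e / 4).
    apply upper_density_ev_imp with (fun k =>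
      (frac_part (x k) <= b + e' /\ ~ frac_part (x k) < a - e') \/
      (~ frac_part (x k) < 1 - e' \/ frac_part (x k) <= e')).
    + generalize (Hnear e' ltac:(unfold e'; lra)). apply filter_imp.
      intros k Hk HP. destruct (Hk HP) as [M HM].
      destruct (frac_part_near_Z (x k) M a b e') as [H|[H|H]]; lra.
    + replace (b - a + e) with ((b + e' - (a - e')) + ((1 - (1 - e')) + e'))
        by (unfold e'; field).
      apply upper_density_or; [apply upper_density_and_not | apply upper_density_or].
      * intros k. unfold e'. lra.
      * apply upper_density_frac_le; auto. unfold e'; lra.
      * apply lower_density_frac_lt; auto. unfold e'; lra.
      * apply upper_density_not, lower_density_frac_lt; auto. unfold e'; lra.
      * apply upper_density_frac_le; auto. unfold e'; lra.
  - apply lower_density_approx. intros e He.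
    set (e' := e / 2).
    apply lower_density_ev_imp with (fun k =>
      frac_part (x k) <= b - e' /\ ~ frac_part (x k) < a + e').
    + generalize (Hinside e' ltac:(unfold e'; lra)). apply filter_imp.
      intros k Hk [H1 H2]. apply Hk. lra.
    + replace (b - a - e) with ((b - e') - (a + e')) by (unfold e'; field).
      apply lower_density_and_not.
      * apply lower_density_frac_le; auto. unfold e'; lra.
      * apply upper_density_frac_lt; auto. unfold e'; lra.
Qed.

(** * Leading blocks of large integers *)

Section Block_asymptotics.
Variables (s : nat) (b bt : list bool).
Hypotheses (Hs : (2 <= s)%nat) (Hb : inFs s b) (Ht : is_tilde s b bt).

Let Hbl : length b = s.
Proof. apply inFs_iff in Hb; [tauto | lia]. Qed.

Let Hbn : no_adj b.
Proof. apply inFs_iff in Hb; [tauto | lia]. Qed.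

Let Hbh : hd false b = true.
Proof. apply inFs_iff in Hb; [tauto | lia]. Qed.

Let Hbth : hd false bt = true := hd_tilde s b bt Hs Hb Ht.

Lemma log_phi_dotw_tilde_le_1 : log_phi (dotw bt) <= 1.
Proof.
  replace 1 with (log_phi (phi ^ 1)) by (rewrite log_phi_pow; reflexivity).
  apply log_phi_le_compat; [pose proof (dotw_ge_1 bt Hbth); lra|].
  simpl. rewrite Rmult_1_r.
  destruct (tilde_cases s b bt Hs Hb Ht) as [[Hc _]|[-> _]].
  - apply inFs_iff in Hc as [_ [Hn _]]; [now apply dotw_le_phi | lia].
  - rewrite dotw_last_block; auto. lra.
Qed.

Lemma log_phi_valF_pad_block e : 0 < e -> eventually (fun r =>
  Rabs (log_phi (INR (valF_pad b r)) -
        (INR (s + r) + log_phi fib_coef + log_phi (dotw b))) < e /\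
  Rabs (log_phi (INR (valF_pad bt r)) -
        (INR (s + r) + log_phi fib_coef + log_phi (dotw bt))) < e).
Proof.
  intros He.
  generalize (filter_and (F := eventually) _ _ (log_phi_valF_pad b Hbh e He)
    (log_phi_valF_pad bt Hbth e He)).
  apply filter_imp. intros r. now rewrite Hbl, (length_tilde s b bt Hs Hb Ht).
Qed.

(** Compare the asymptotics of both sides of [valF_pad b r < valF_pad bt r]. *)
Lemma log_phi_dotw_le_tilde : log_phi (dotw b) <= log_phi (dotw bt).
Proof.
  apply Rnot_lt_le. intros Hlt.
  set (e := (log_phi (dotw b) - log_phi (dotw bt)) / 2).
  destruct (log_phi_valF_pad_block e ltac:(unfold e; lra)) as [r Hr].
  destruct (Hr r (le_n r)) as [Hpb Hpbt].
  pose proof (valF_app_lt_tilde s b bt Hs Hb Ht (repeat false r)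
    (no_adj_app_zeros b r Hbn)) as Hlt2.
  rewrite repeat_length in Hlt2. fold (valF_pad b r) in Hlt2.
  apply lt_INR, log_phi_lt_iff in Hlt2; [|now apply valF_pad_pos ..].
  apply Rabs_lt_between' in Hpb, Hpbt. unfold e in *. lra.
Qed.

Lemma LB_window_near e : 0 < e -> eventually (fun m : nat => LB_is s m b ->
  exists M : Z, log_phi (dotw b) - e <= FFinv (INR m) - IZR M <= log_phi (dotw bt) + e).
Proof.
  intros He. destruct (log_phi_valF_pad_block (e / 2) ltac:(lra)) as [R0 HR0].
  generalize (filter_and (F := eventually) _ _ (FFinv_asymptotic (e / 2) ltac:(lra))
    (eventually_ge_nat (F (S (s + R0))))).
  apply filter_imp. intros m [Hx Hm] HL.
  apply (LB_is_iff s b bt Hs Hb Ht) in HL as [r [Hr1 Hr2]].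
  assert (HrR : (R0 <= r)%nat).
  { destruct (Nat.le_gt_cases R0 r) as [|Hr]; auto.
    pose proof (valF_pad_tilde_le s b bt Hs Hb Ht r).
    pose proof (F_le_mono (S (s + r)) (S (s + R0)) ltac:(lia)). lia. }
  destruct (HR0 r HrR) as [Hpb Hpbt].
  pose proof (valF_pad_pos b r Hbh) as Hpos.
  apply le_INR in Hr1. apply lt_INR in Hr2.
  apply log_phi_lt_iff in Hr2; [|lra | now apply valF_pad_pos].
  apply (log_phi_le_compat _ _ Hpos) in Hr1.
  exists (Z.of_nat (s + r)). rewrite <- INR_IZR_INZ.
  apply Rabs_lt_between' in Hx, Hpb, Hpbt. lra.
Qed.

Lemma LB_window_inside e : 0 < e -> eventually (fun m : nat =>
  log_phi (dotw b) + e <= frac_part (FFinv (INR m)) <= log_phi (dotw bt) - e -> LB_is s m b).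
Proof.
  intros He. destruct (log_phi_valF_pad_block (e / 2) ltac:(lra)) as [R0 HR0].
  generalize (filter_and (F := eventually) _ _
    (filter_and (F := eventually) _ _
       (FFinv_asymptotic (e / 2) ltac:(lra)) (eventually_ge_nat 1))
    (eventually_log_phi_ge (INR (s + R0) + log_phi fib_coef + e / 2 + 1))).
  apply filter_imp. intros m [[Hx Hm] Hlog] Hfrac.
  apply le_INR in Hm. simpl INR in Hm.
  set (x := FFinv (INR m)) in *. unfold frac_part in Hfrac.
  pose proof (base_Int_part x) as [Hi1 Hi2].
  set (N := Int_part x) in *.
  apply Rabs_lt_between' in Hx.
  assert (HN : (Z.of_nat (s + R0) < N)%Z) by (apply lt_IZR; rewrite <- INR_IZR_INZ; lra).
  set (r := (Z.to_nat N - s)%nat).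
  assert (HM : INR (s + r) = IZR N)
    by (rewrite INR_IZR_INZ; f_equal; unfold r; lia).
  destruct (HR0 r ltac:(unfold r; lia)) as [Hpb Hpbt].
  apply Rabs_lt_between' in Hpb, Hpbt. rewrite HM in Hpb, Hpbt.
  apply (LB_is_iff s b bt Hs Hb Ht). exists r. split.
  - apply Nat.lt_le_incl, INR_lt, log_phi_lt_iff; [now apply valF_pad_pos | lra | lra].
  - apply INR_lt, log_phi_lt_iff; [lra | now apply valF_pad_pos | lra].
Qed.

End Block_asymptotics.

Lemma increasing_ge_id (K : nat -> nat) :
  (forall n, (1 <= n)%nat -> (0 < K n)%nat) ->
  (forall n, (1 <= n)%nat -> (K n < K (S n))%nat) ->
  forall n, (1 <= n)%nat -> (n <= K n)%nat.
Proof.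
  intros Kpos Kinc n Hn. induction Hn as [|n Hn IH]; [now apply Kpos|].
  specialize (Kinc n Hn). lia.
Qed.

Lemma eventually_comp_ge (K : nat -> nat) (P : nat -> Prop) :
  (forall n, (1 <= n)%nat -> (n <= K n)%nat) ->
  eventually P -> eventually (fun n => P (K n)).
Proof.
  intros HK [N HN]. exists (S N). intros n Hn. apply HN.
  specialize (HK n ltac:(lia)). lia.
Qed.

Theorem theorem4p5 (K : nat -> nat)
  (Kpos : forall n, (1 <= n)%nat -> (0 < K n)%nat)
  (Kinc : forall n, (1 <= n)%nat -> (K n < K (S n))%nat)
  (Heq : equidistributed (fun n => FFinv (INR (K n)))) :
  forall (s : nat) (b bt : list bool), (2 <= s)%nat -> inFs s b -> is_tilde s b bt ->
    is_lim_seq (fun n => INR (count_upto (fun k => LB_is s (K k) b) n) / INR n)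
               (log_phi (dotw bt / dotw b)).
Proof.
  intros s b bt Hs Hb Ht.
  assert (Hbh : hd false b = true) by (apply inFs_iff in Hb; [tauto | lia]).
  pose proof (hd_tilde s b bt Hs Hb Ht) as Hbth.
  pose proof (increasing_ge_id K Kpos Kinc) as HK.
  rewrite log_phi_div by (apply dotw_ge_1 in Hbh, Hbth; lra).
  apply (density_of_frac_window (fun n => FFinv (INR (K n)))).
  - exact Heq.
  - split; [now apply log_phi_nonneg, dotw_ge_1 | now apply (log_phi_dotw_le_tilde s b bt)].
  - now apply (log_phi_dotw_tilde_le_1 s b bt).
  - intros e He. exact (eventually_comp_ge K _ HK (LB_window_near s b bt Hs Hb Ht e He)).
  - intros e He. exact (eventually_comp_ge K _ HK (LB_window_inside s b bt Hs Hb Ht e He)).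
Qed.
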